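(* Let $n$ and $x$ be integers with $4 \leq x \leq n-3$ and such that $(n-4)x$ is even. Let $d$ be the sequence of length $n$ $$d = (n-1,\, n-1,\, \underbrace{x, \ldots, x}_{n-4},\, 2,\, 2).$$ Then $d$ is a $2$-factorable graphic sequence, and no realization of $d$ has a connected $2$-factor.
   Context: A finite sequence of nonnegative integers $d = (d_1, \ldots, d_n)$ is graphic if there is a simple graph on vertices $v_1, \ldots, v_n$ with $\deg(v_i) = d_i$ for all $i$; such a graph is a realization of $d$. A $k$-factor of a graph $G$ is a spanning subgraph of $G$ in which every vertex has degree $k$. A graphic sequence $d$ is $k$-factorable if some realization of $d$ contains a $k$-factor. A connected $k$-factor is a $k$-factor that is a connected graph. *)

From mathcomp Require Import all_boot.
Unset Printing Implicit Defensive.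

Definition simple_graph (m : nat) (e : rel 'I_m) : Prop :=
  irreflexive e /\ symmetric e.

Definition deg (m : nat) (e : rel 'I_m) (i : 'I_m) : nat := #|[set j | e i j]|.

(* e is a realization of d: vertex v_i has degree d_i (0-indexed). *)
Definition realization (d : seq nat) (e : rel 'I_(size d)) : Prop :=
  simple_graph (size d) e /\ forall i : 'I_(size d), deg (size d) e i = nth 0 d i.

Definition graphic (d : seq nat) : Prop := exists e, realization d e.

Definition k_factor (m k : nat) (e f : rel 'I_m) : Prop :=
  simple_graph m f /\ subrel f e /\ forall i, deg m f i = k.

Definition k_factorable (k : nat) (d : seq nat) : Prop :=
  exists e, realization d e /\ exists f, k_factor (size d) k e f.

Definition connected_graph (m : nat) (f : rel 'I_m) : Prop :=
  forall i j, connect f i j.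

Definition connected_k_factor (m k : nat) (e f : rel 'I_m) : Prop :=
  k_factor m k e f /\ connected_graph m f.

Definition dseq (n x : nat) : seq nat :=
  [:: n.-1; n.-1] ++ nseq (n - 4) x ++ [:: 2; 2].

(* Realization: the two vertices of degree n - 1 are hubs adjacent to everything,
   the two vertices of degree 2 are joined to the hubs only, and the n - 4 middle
   vertices carry the circulant graph on Z_(n-4) with jumps +-1, ..., +-(x/2 - 1),
   plus the antipodal jump when x is odd (n - 4 is then even by the parity
   hypothesis); this circulant is (x - 2)-regular.  A 2-factor is the 4-cycle
   through the hubs and the degree-2 vertices together with the Hamiltonian cycle
   of jumps +-1 on the middle vertices.
   Conversely, in any realization the hubs a, b are adjacent to all vertices, so
   the degree-2 vertices u, v have neighbourhood {a, b}.  A 2-factor uses both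
   edges at u and at v, hence both of its edges at a and at b, so {a, b, u, v} is
   a union of its components and the middle vertices are never reached. *)

From mathcomp Require Import all_boot zify.

Set Implicit Arguments.
Unset Strict Implicit.

Lemma count_iota_all (P : pred nat) s l :
  {in iota s l, forall t, P t} -> count P (iota s l) = l.
Proof. by move=> /allP; rewrite all_count size_iota => /eqP. Qed.

Lemma count_iota_none (P : pred nat) s l :
  {in iota s l, forall t, ~~ P t} -> count P (iota s l) = 0.
Proof. by move=> /hasPn; rewrite has_count lt0n negbK => /eqP. Qed.

Lemma count_iota_shift (P : pred nat) s l :
  count P (iota s l) = count (fun t => P (s + t)) (iota 0 l).
Proof. by rewrite -{1}[s]addn0 iotaDl count_map. Qed.

Definition diff_mod m i j := if i <= j then j - i else m + j - i.

Definition circulant m (S : pred nat) : rel nat :=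
  fun i j => [&& i < m, j < m & S (diff_mod m i j)].

Section Circulant.
Variables (m : nat) (S : pred nat).

Lemma circulant_irr : ~~ S 0 -> irreflexive (circulant m S).
Proof. by move=> S0 i; rewrite /circulant /diff_mod leqnn subnn (negbTE S0) !andbF. Qed.

Lemma circulant_sym :
  (forall d, 0 < d < m -> S (m - d) = S d) -> symmetric (circulant m S).
Proof.
move=> S_sym i j; rewrite /circulant andbCA; case: (ltnP i m) => //= lt_im.
case: (ltnP j m) => //= lt_jm; rewrite /diff_mod.
case: (ltngtP i j) => [lt_ij | lt_ji | -> //].
- by rewrite -(S_sym (j - i)); [congr S | ]; lia.
- by rewrite -(S_sym (i - j)); [congr S | ]; lia.
Qed.

Lemma circulant_sub S' : subpred S S' -> subrel (circulant m S) (circulant m S').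
Proof. by move=> sub i j; rewrite /circulant => /and3P [-> -> /sub]. Qed.

Lemma count_circulant i :
  i < m -> count (circulant m S i) (iota 0 m) = count S (iota 0 m).
Proof.
move=> lt_im.
have -> : count (circulant m S i) (iota 0 m) = count S (map (diff_mod m i) (iota 0 m)).
  rewrite count_map; apply: eq_in_count => j.
  by rewrite mem_iota /circulant lt_im => /= ->.
(* j |-> j - i (mod m) maps [0, m) onto a rotation of itself. *)
have -> : iota 0 m = iota 0 i ++ iota i (m - i) by rewrite -iotaD subnKC // ltnW.
rewrite map_cat count_cat.
have -> : map (diff_mod m i) (iota 0 i) = iota (m - i) i.
  rewrite -[m - i]addn0 iotaDl; apply/eq_in_map => j.
  by rewrite mem_iota /diff_mod => /andP [_ lt_ji]; rewrite leqNgt lt_ji /=; lia.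
have -> : map (diff_mod m i) (iota i (m - i)) = iota 0 (m - i).
  rewrite -[X in iota X _](addn0 i) iotaDl -map_comp.
  by rewrite (@eq_map _ _ _ id) ?map_id // => j /=; rewrite /diff_mod leq_addr addKn.
by rewrite addnC -!count_cat -!iotaD subnK ?subnKC // ltnW.
Qed.

End Circulant.

(* The jumps +-1, ..., +-h modulo m, and the antipodal jump m/2 when c holds. *)
Definition jumps m h (c : bool) : pred nat :=
  fun d => (0 < d <= h) || (m - h <= d) || c && (d + d == m).

Section Jumps.
Variables (m h : nat) (c : bool).
Hypothesis lt_hm : h + h + c < m.

Lemma jumps0 : ~~ jumps m h c 0.
Proof. by rewrite /jumps; case: c lt_hm => /=; lia. Qed.

Lemma jumps_sym d : 0 < d < m -> jumps m h c (m - d) = jumps m h c d.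
Proof. by rewrite /jumps; case: c lt_hm => /=; lia. Qed.

Lemma count_jumps : c ==> ~~ odd m -> count (jumps m h c) (iota 0 m) = h + h + c.
Proof.
move=> /implyP even_m.
(* Of the middle block (h, m - h), only m/2 can be a jump. *)
rewrite -[X in iota 0 X](_ : h.+1 + (m - h - h.+1) + h = m); last by lia.
rewrite !iotaD !count_cat /= add0n (negbTE jumps0).
rewrite count_iota_all => [|t]; last by rewrite mem_iota /jumps; lia.
rewrite [count _ (iota (_ + _) h)]count_iota_all => [|t]; last first.
  by rewrite mem_iota /jumps; lia.
suff -> : count (jumps m h c) (iota h.+1 (m - h - h.+1)) = c by lia.
case: (boolP c) => [c_set | /negbTE c_unset]; rewrite ?c_set ?c_unset.
  have half_m : m./2 + m./2 = m.
    by have := odd_double_half m; rewrite (negbTE (even_m c_set)); lia.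
  rewrite (@eq_in_count _ _ (pred1 m./2)) => [|t]; last first.
    by rewrite mem_iota /jumps /=; lia.
  by rewrite count_uniq_mem ?iota_uniq // mem_iota; lia.
by rewrite count_iota_none // => t; rewrite mem_iota /jumps /=; lia.
Qed.

Lemma circulant_jumps_regular : c ==> ~~ odd m ->
  [/\ irreflexive (circulant m (jumps m h c)), symmetric (circulant m (jumps m h c)) &
      forall i, i < m -> count (circulant m (jumps m h c) i) (iota 0 m) = h + h + c].
Proof.
move=> even_m; split; first exact/circulant_irr/jumps0.
  by apply: circulant_sym => d; apply: jumps_sym.
by move=> i lt_im; rewrite count_circulant // count_jumps.
Qed.

End Jumps.

(* Vertex layout on [0, m + 4): 0 and 1 are the hubs, [2, m + 2) carries the
   middle graph shifted by 2, and m + 2, m + 3 are the vertices of degree 2. *)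
Definition lift_mid m (g : rel nat) : rel nat :=
  fun i j => [&& 2 <= i < m + 2, 2 <= j < m + 2 & g (i - 2) (j - 2)].

Definition hub_graph m (g : rel nat) : rel nat :=
  fun i j => ((i < 2) || (j < 2)) && (i != j) || lift_mid m g i j.

Definition hub_factor m (c : rel nat) : rel nat :=
  fun i j => (i < 2) && (m + 2 <= j) || (j < 2) && (m + 2 <= i) || lift_mid m c i j.

Lemma iota_hubs m : iota 0 (m + 4) = [:: 0; 1] ++ iota 2 m ++ [:: m + 2; m + 3].
Proof.
have -> : m + 4 = 2 + m + 2 by lia.
by rewrite !iotaD /= !add0n (addnC 2) -addnS.
Qed.

Section LiftMid.
Variables (m : nat) (g : rel nat).

Lemma lift_mid_irr : irreflexive g -> irreflexive (lift_mid m g).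
Proof. by move=> g_irr i; rewrite /lift_mid g_irr !andbF. Qed.

Lemma lift_mid_sym : symmetric g -> symmetric (lift_mid m g).
Proof. by move=> g_sym i j; rewrite /lift_mid g_sym andbCA. Qed.

Lemma lift_mid_out i j : ~~ (2 <= j < m + 2) -> lift_mid m g i j = false.
Proof. by rewrite /lift_mid => /negbTE ->; rewrite andbF. Qed.

Lemma count_lift_mid i :
  count (lift_mid m g i) (iota 2 m) =
  if 2 <= i < m + 2 then count (g (i - 2)) (iota 0 m) else 0.
Proof.
rewrite count_iota_shift; case: ifP => i_mid; last first.
  by rewrite count_iota_none // => t _; rewrite /lift_mid i_mid.
by apply: eq_in_count => t; rewrite mem_iota /lift_mid i_mid addKn /=; lia.
Qed.

End LiftMid.

Lemma count_hub_graph m g i : i < m + 4 ->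
  count (hub_graph m g i) (iota 0 (m + 4)) =
  if i < 2 then m + 3 else if i < m + 2 then count (g (i - 2)) (iota 0 m) + 2 else 2.
Proof.
move=> lt_i; rewrite iota_hubs !count_cat.
have -> : count (hub_graph m g i) (iota 2 m) =
          if i < 2 then m else count (lift_mid m g i) (iota 2 m).
  case: ltnP => [i_hub | i_ge2].
    by rewrite count_iota_all // => t; rewrite mem_iota /hub_graph i_hub /=; lia.
  by apply: eq_in_count => t; rewrite mem_iota /hub_graph /=; lia.
rewrite count_lift_mid /= /hub_graph !lift_mid_out //; try lia.
by case: (ltnP i 2) => ? /=; case: (ltnP i (m + 2)) => ? /=; lia.
Qed.

Lemma count_hub_factor m c i : i < m + 4 ->
  count (hub_factor m c i) (iota 0 (m + 4)) =
  if 2 <= i < m + 2 then count (c (i - 2)) (iota 0 m) else 2.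
Proof.
move=> lt_i; rewrite iota_hubs !count_cat.
have -> : count (hub_factor m c i) (iota 2 m) = count (lift_mid m c i) (iota 2 m).
  by apply: eq_in_count => t; rewrite mem_iota /hub_factor; lia.
rewrite count_lift_mid /= /hub_factor !lift_mid_out //; try lia.
by case: (ltnP i 2) => ? /=; case: (ltnP i (m + 2)) => ? /=; lia.
Qed.

Lemma hub_graph_irr m g : irreflexive g -> irreflexive (hub_graph m g).
Proof. by move=> g_irr i; rewrite /hub_graph eqxx andbF lift_mid_irr. Qed.

Lemma hub_graph_sym m g : symmetric g -> symmetric (hub_graph m g).
Proof.
by move=> g_sym i j; rewrite /hub_graph (orbC (i < 2)) eq_sym (lift_mid_sym _ g_sym).
Qed.

Lemma hub_factor_irr m c : irreflexive c -> irreflexive (hub_factor m c).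
Proof. by move=> c_irr i; rewrite /hub_factor lift_mid_irr //; lia. Qed.

Lemma hub_factor_sym m c : symmetric c -> symmetric (hub_factor m c).
Proof. by move=> c_sym i j; rewrite /hub_factor (lift_mid_sym _ c_sym) (orbC (_ && _)). Qed.

Lemma hub_factor_sub m g c : subrel c g -> subrel (hub_factor m c) (hub_graph m g).
Proof.
move=> c_sub i j; rewrite /hub_factor /hub_graph /lift_mid.
by case/orP=> [hub | /and3P [-> -> /c_sub ->]]; [apply/orP; left; lia | rewrite orbT].
Qed.

Definition ord_rel N (E : rel nat) : rel 'I_N := fun i j => E i j.

Lemma deg_ord_rel N E (i : 'I_N) : deg N (ord_rel E) i = count (E i) (iota 0 N).
Proof.
rewrite /deg -sum1_card (eq_bigl (fun j : 'I_N => E i j)) => [|j]; last by rewrite inE.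
by rewrite -(big_mkord (E i) (fun _ => 1)) sum1_count /index_iota subn0.
Qed.

Lemma simple_ord_rel N E : irreflexive E -> symmetric E -> simple_graph N (ord_rel E).
Proof. by move=> E_irr E_sym; split=> [i | i j]; rewrite /ord_rel. Qed.

Lemma size_dseq m x : size (dseq (m + 4) x) = m + 4.
Proof. by rewrite /dseq !size_cat size_nseq addnK /=; lia. Qed.

Lemma nth_dseq m x i : i < m + 4 ->
  nth 0 (dseq (m + 4) x) i = if i < 2 then m + 3 else if i < m + 2 then x else 2.
Proof.
move=> lt_i; rewrite /dseq nth_cat /= nth_cat size_nseq nth_nseq addnK.
rewrite -[[:: 2; 2]]/(nseq 2 2) -[[:: _.-1; _]]/(nseq 2 _) !nth_nseq.
by repeat case: ifP => ?; lia.
Qed.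

Lemma hub_graph_realization m x g : 2 <= x -> irreflexive g -> symmetric g ->
  (forall i, i < m -> count (g i) (iota 0 m) = x - 2) ->
  realization (dseq (m + 4) x) (ord_rel (hub_graph m g)).
Proof.
move=> x_ge2 g_irr g_sym g_deg.
split; first exact: simple_ord_rel (hub_graph_irr _ g_irr) (hub_graph_sym _ g_sym).
move=> i; have lt_i := ltn_ord i; rewrite [X in _ < X]size_dseq in lt_i.
rewrite deg_ord_rel [X in iota 0 X]size_dseq count_hub_graph // nth_dseq //.
by case: ifP => // i_ge2; case: ifP => // i_mid; rewrite g_deg; lia.
Qed.

Lemma hub_factor_two_factor N m g c : N = m + 4 ->
  irreflexive c -> symmetric c -> subrel c g ->
  (forall i, i < m -> count (c i) (iota 0 m) = 2) ->
  k_factor N 2 (ord_rel (hub_graph m g)) (ord_rel (hub_factor m c)).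
Proof.
move=> -> c_irr c_sym c_sub c_deg.
split; first exact: simple_ord_rel (hub_factor_irr _ c_irr) (hub_factor_sym _ c_sym).
split=> [i j | i]; first exact: hub_factor_sub.
by rewrite deg_ord_rel count_hub_factor //; case: ifP => // i_mid; rewrite c_deg; lia.
Qed.

Lemma card2_subset_pair (T : finType) (A : {set T}) p q :
  #|A| = 2 -> A \subset [set p; q] -> A = [set p; q].
Proof. by move=> cardA sub; apply/eqP; rewrite eqEcard sub cardA cards2 ltnS leq_b1. Qed.

Lemma card2_pair_subset (T : finType) (A : {set T}) p q :
  #|A| = 2 -> p != q -> [set p; q] \subset A -> A = [set p; q].
Proof. by move=> cardA pq sub; apply/eqP; rewrite eq_sym eqEcard sub cardA cards2 pq. Qed.

Lemma full_deg_adj N (e : rel 'I_N) a j :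
  irreflexive e -> deg N e a = N.-1 -> j != a -> e a j.
Proof.
move=> e_irr deg_a j_a.
have sub : [set k | e a k] \subset [set~ a].
  by apply/subsetP => k; rewrite !inE; apply: contraTneq => ->; rewrite e_irr.
have /eqP/setP/(_ j) : [set k | e a k] == [set~ a].
  by rewrite eqEcard sub cardsC1 card_ord -deg_a leqnn.
by rewrite !inE j_a.
Qed.

Section PendantPair.
Variables (N : nat) (e : rel 'I_N) (a b u v : 'I_N).
Hypothesis uv : u != v.
Hypotheses (e_u : [set j | e u j] = [set a; b]) (e_v : [set j | e v j] = [set a; b]).

Lemma two_factor_closed f : k_factor N 2 e f -> closed f [set a; b; u; v].
Proof.
move=> [[_ f_sym] [f_sub f_deg]].
have f_pendant y : [set j | e y j] = [set a; b] -> [set j | f y j] = [set a; b].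
  move=> e_y; apply: card2_subset_pair; first exact: f_deg.
  by rewrite -e_y; apply/subsetP => j; rewrite !inE; apply: f_sub.
have f_hub y : y \in [set a; b] -> [set j | f y j] = [set u; v].
  move=> y_ab; apply: card2_pair_subset (f_deg y) uv _.
  apply/subsetP => j; rewrite !inE => /orP [] /eqP ->; rewrite f_sym.
    by move: (f_pendant _ e_u) => /setP/(_ y); rewrite y_ab inE.
  by move: (f_pendant _ e_v) => /setP/(_ y); rewrite y_ab inE.
have step y z : f y z -> y \in [set a; b; u; v] -> z \in [set a; b; u; v].
  move=> fyz; have z_nbr : z \in [set j | f y j] by rewrite inE.
  rewrite !inE -orbA => /orP [y_ab | y_uv]; move: z_nbr.
    by rewrite f_hub ?inE // => /orP [] ->; rewrite !orbT.
  by case/orP: y_uv => /eqP ->; rewrite f_pendant // !inE => /orP [] ->; rewrite ?orbT.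
by move=> y z fyz; apply/idP/idP; apply: step; rewrite // f_sym.
Qed.

Lemma no_connected_two_factor w :
  w \notin [set a; b; u; v] -> ~ exists f, connected_k_factor N 2 e f.
Proof.
move=> w_out [f [f_factor f_conn]].
have := closed_connect (two_factor_closed f_factor) (f_conn u w).
by rewrite (negbTE w_out) !inE eqxx !orbT.
Qed.

End PendantPair.

Lemma dseq_no_connected_two_factor m x (e : rel 'I_(size (dseq (m + 4) x))) :
  0 < m -> realization (dseq (m + 4) x) e -> ~ exists f, connected_k_factor _ 2 e f.
Proof.
move=> m_gt0 [[e_irr e_sym] e_deg].
move: e e_irr e_sym e_deg; rewrite size_dseq => e e_irr e_sym e_deg.
have deg_e y : deg _ e y = if y < 2 then m + 3 else if y < m + 2 then x else 2.
  by rewrite e_deg nth_dseq.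
have [lt0 lt1 lt2 ltu ltv] :
  [/\ 0 < m + 4, 1 < m + 4, 2 < m + 4, m + 2 < m + 4 & m + 3 < m + 4] by split; lia.
pose a := Ordinal lt0; pose b := Ordinal lt1; pose u := Ordinal ltu; pose v := Ordinal ltv.
have hub_adj (y j : 'I_(m + 4)) : y < 2 -> j != y -> e y j.
  by move=> y_hub j_y; apply: full_deg_adj => //; rewrite deg_e y_hub; lia.
have e_pendant (y : 'I_(m + 4)) : m + 2 <= y -> [set j | e y j] = [set a; b].
  move=> y_pend; apply: card2_pair_subset (_ : a != b) _ => //.
    by rewrite [LHS](deg_e y) !ifF //; lia.
  apply/subsetP => j; rewrite !inE => /orP [] /eqP ->; rewrite e_sym hub_adj //.
  1,2: by rewrite -val_eqE /=; lia.
have uv : u != v by rewrite -val_eqE /=; lia.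
have w_out : Ordinal lt2 \notin [set a; b; u; v] by rewrite !inE -!val_eqE /=; lia.
by apply: (no_connected_two_factor uv (e_pendant u _) (e_pendant v _) w_out) => /=; lia.
Qed.

Theorem mainTheorem1 (n x : nat) :
  4 <= x -> x <= n - 3 -> ~~ odd ((n - 4) * x) ->
  graphic (dseq n x) /\ k_factorable 2 (dseq n x) /\
  (forall e : rel 'I_(size (dseq n x)), realization (dseq n x) e ->
     ~ exists f, connected_k_factor (size (dseq n x)) 2 e f).
Proof.
move=> x_ge4 x_le even_prod.
have [m def_n] : exists m, n = m + 4 by exists (n - 4); lia.
subst n; rewrite addnK in even_prod.
set h := x./2 - 1; set c := odd x.
have jumps_x : h + h + c = x - 2 by have := odd_double_half x; lia.
have lt_hm : h + h + c < m by lia.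
have even_m : c ==> ~~ odd m by rewrite implybE -negb_and -oddM mulnC.
have [g_irr g_sym g_deg] := circulant_jumps_regular lt_hm even_m.
have lt_1m : 1 + 1 + false < m by lia.
have [cyc_irr cyc_sym cyc_deg] := circulant_jumps_regular lt_1m isT.
have cyc_sub : subrel (circulant m (jumps m 1 false)) (circulant m (jumps m h c)).
  by apply: circulant_sub => d; rewrite /jumps /=; lia.
rewrite jumps_x in g_deg.
pose e : rel 'I_(size (dseq (m + 4) x)) :=
  ord_rel (hub_graph m (circulant m (jumps m h c))).
pose f : rel 'I_(size (dseq (m + 4) x)) :=
  ord_rel (hub_factor m (circulant m (jumps m 1 false))).
have e_real : realization (dseq (m + 4) x) e.
  exact: hub_graph_realization (leq_trans (isT : 2 <= 4) x_ge4) g_irr g_sym g_deg.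
have f_factor : k_factor _ 2 e f.
  exact: hub_factor_two_factor (size_dseq m x) cyc_irr cyc_sym cyc_sub cyc_deg.
split; first by exists e.
split; first by exists e; split; last by exists f.
by move=> e'; apply: dseq_no_connected_two_factor; lia.
Qed.
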